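(* Let $b,c\in Z^{10}$ with $\sum_i b_i=\sum_i c_i=0$, and assume $t\nmid B_i$ and $t\nmid C_i$ for all odd $i$. Let $l$ be odd such that $t\mid B_l+B_{l+2}$ and $t\nmid B_i+B_{i+2}$ for all odd $i\neq l$, and likewise $t\mid C_l+C_{l+2}$ and $t\nmid C_i+C_{i+2}$ for all odd $i\neq l$ (indices mod $10$). Then $\mathbb{M}(b)\cong\mathbb{M}(c)$ as $B_{5,10}$-modules if and only if $$t\mid (B_{l-2}+B_l)\,C_l\,B_{l+4}\,C_{l+6}-(C_{l-2}+C_l)\,B_l\,C_{l+4}\,B_{l+6}.$$
   Context: Let $Z=\mathbb{C}[[t]]$. Let $\Gamma_{10}$ be the quiver with vertices $0,1,\dots,9$ (indices taken mod $10$) on a cycle and arrows $x_i\colon i-1\to i$, $y_i\colon i\to i-1$ for $i=1,\dots,10$. Let $B_{5,10}$ be the completed path algebra of $\Gamma_{10}$ modulo the closed ideal generated by $xy=yx$ and $x^5=y^5$ at every vertex. For $b=(b_1,\dots,b_{10})\in Z^{10}$ with $\sum_i b_i=0$, the $B_{5,10}$-module $\mathbb{M}(b)$ has $V_i=Z\oplus Z$ at every vertex, and for odd $j$: $x_j=\begin{pmatrix} t& b_j\\ 0&1\end{pmatrix}$, $y_j=\begin{pmatrix} 1&-b_j\\0&t\end{pmatrix}$; for even $j$: $x_j=\begin{pmatrix}1&b_j\\0&t\end{pmatrix}$, $y_j=\begin{pmatrix}t&-b_j\\0&1\end{pmatrix}$. An isomorphism $\mathbb{M}(b)\to\mathbb{M}(c)$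 is a family of invertible $Z$-linear maps $\varphi_i\colon Z^2\to Z^2$ commuting with all $x_i$ and $y_i$. For odd $i$ write $B_i=b_i+b_{i+1}$ and $C_i=c_i+c_{i+1}$ (indices mod $10$). *)

From HB Require Import structures.
From mathcomp Require Import all_boot all_algebra.
From mathcomp Require Import boolp complex Rstruct.

Set Implicit Arguments.
Unset Strict Implicit.
Unset Printing Implicit Defensive.

Import GRing.Theory.
Local Open Scope ring_scope.

Definition CC : fieldType := Rdefinitions.R[i].

Record fps : Type := FPS { coef : nat -> CC }.

HB.instance Definition _ := gen_eqMixin fps.
HB.instance Definition _ := gen_choiceMixin fps.

Lemma fpsP (f g : fps) : (forall n, coef f n = coef g n) -> f = g.
Proof.
by case: f g => f [g] /= H; congr FPS; apply: funext.
Qed.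

Definition fps0 : fps := FPS (fun _ => 0).
Definition fps_opp (f : fps) : fps := FPS (fun n => - coef f n).
Definition fps_add (f g : fps) : fps := FPS (fun n => coef f n + coef g n).

Fact fps_addA : associative fps_add.
Proof. by move=> f g h; apply: fpsP => n /=; rewrite addrA. Qed.
Fact fps_addC : commutative fps_add.
Proof. by move=> f g; apply: fpsP => n /=; rewrite addrC. Qed.
Fact fps_add0 : left_id fps0 fps_add.
Proof. by move=> f; apply: fpsP => n /=; rewrite add0r. Qed.
Fact fps_addN : left_inverse fps0 fps_opp fps_add.
Proof. by move=> f; apply: fpsP => n /=; rewrite addNr. Qed.

HB.instance Definition _ :=
  GRing.isZmodule.Build fps fps_addA fps_addC fps_add0 fps_addN.

Definition fps_mul (f g : fps) : fps :=
  FPS (fun n => \sum_(j < n.+1) coef f j * coef g (n - j)).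
Definition fps1 : fps := FPS (fun n => (n == 0%N)%:R).

Lemma coef_mul_rev (f g : fps) n :
  coef (fps_mul f g) n = \sum_(j < n.+1) coef f (n - j) * coef g j.
Proof.
rewrite /= (reindex_inj rev_ord_inj) /=; apply: eq_bigr => j _.
by rewrite subSS subKn // -ltnS.
Qed.

Lemma coef_mul (f g : fps) n :
  coef (fps_mul f g) n = \sum_(j < n.+1) coef f j * coef g (n - j).
Proof. by []. Qed.

Fact fps_mulA : associative fps_mul.
Proof.
move=> p q r; apply: fpsP => i; rewrite coef_mul [in RHS]coef_mul_rev.
pose coef3 j k := coef p j * (coef q (i - j - k) * coef r k).
transitivity (\sum_(j < i.+1) \sum_(k < i.+1 | (k <= i - j)%N) coef3 j k).
  apply: eq_bigr => j _; rewrite coef_mul_rev big_distrr /=.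
  by rewrite (big_ord_narrow_leq (leq_subr _ _)).
rewrite (exchange_big_dep predT) //=; apply: eq_bigr => k _.
transitivity (\sum_(j < i.+1 | (j <= i - k)%N) coef3 j k).
  apply: eq_bigl => j; rewrite -ltnS -(ltnS j) -!subSn ?leq_ord //.
  by rewrite -subn_gt0 -(subn_gt0 j) -!subnDA addnC.
rewrite (big_ord_narrow_leq (leq_subr _ _)) big_distrl /=.
by apply: eq_bigr => j _; rewrite /coef3 -!subnDA addnC mulrA.
Qed.

Fact fps_mulC : commutative fps_mul.
Proof.
move=> f g; apply: fpsP => n; rewrite coef_mul_rev /=.
by apply: eq_bigr => j _; rewrite mulrC.
Qed.

Fact fps_mul1 : left_id fps1 fps_mul.
Proof.
move=> f; apply: fpsP => n /=; rewrite big_ord_recl /= mul1r subn0.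
by rewrite big1 ?addr0 // => j _; rewrite mul0r.
Qed.

Fact fps_mulDl : left_distributive fps_mul fps_add.
Proof.
move=> f g h; apply: fpsP => n /=; rewrite -big_split /=.
by apply: eq_bigr => j _; rewrite mulrDl.
Qed.

Fact fps1_neq0 : fps1 != fps0.
Proof.
apply/eqP => /(congr1 (fun f => coef f 0)) /= /eqP; by rewrite oner_eq0.
Qed.

HB.instance Definition _ :=
  GRing.Zmodule_isComNzRing.Build fps fps_mulA fps_mulC fps_mul1 fps_mulDl
    fps1_neq0.

Notation Z := fps.
Definition t : Z := FPS (fun n => (n == 1%N)%:R).

Definition tdvd (f : Z) : Prop := exists g : Z, f = t * g.

Definition mx22 (a b c d : Z) : 'M[Z]_2 :=
  \matrix_(i < 2, j < 2)
    if i == 0 then (if j == 0 then a else b) else (if j == 0 then c else d).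

(* Vertices and arrows of Gamma_10 are indexed by 'I_10 (integers mod 10);
   the arrow index j in 'I_10 stands for the arrow number j in 1..10
   (with 10 represented by 0); x_j : j-1 -> j and y_j : j -> j-1.
   Parity is well defined mod 10. A vector b in Z^10 is b : 'I_10 -> Z with
   b_j = b (j mod 10). *)
Definition xmat (b : 'I_10 -> Z) (j : 'I_10) : 'M[Z]_2 :=
  if odd j then mx22 t (b j) 0 1 else mx22 1 (b j) 0 t.
Definition ymat (b : 'I_10 -> Z) (j : 'I_10) : 'M[Z]_2 :=
  if odd j then mx22 1 (- b j) 0 t else mx22 t (- b j) 0 1.

(* An isomorphism M(b) -> M(c): a family of invertible Z-linear maps
   phi_i : Z^2 -> Z^2 (2x2 matrices over Z acting on column vectors)
   commuting with all arrows x_j : j-1 -> j and y_j : j -> j-1. *)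
Definition Miso (b c : 'I_10 -> Z) : Prop :=
  exists phi : 'I_10 -> 'M[Z]_2,
    [/\ forall i, exists psi : 'M[Z]_2, phi i *m psi = 1%:M /\ psi *m phi i = 1%:M,
        forall j : 'I_10, phi j *m xmat b j = xmat c j *m phi (j - 1) &
        forall j : 'I_10, phi (j - 1) *m ymat b j = ymat c j *m phi j].

Definition Bsum (b : 'I_10 -> Z) (i : 'I_10) : Z := b i + b (i + 1).

(* Write an isomorphism phi : M(b) -> M(c) as 2x2 matrices phi_0, ..., phi_9
   over Z = C[[t]].  Since x_j y_j = y_j x_j = t and t is a non-zero-divisor,
   the conditions on the arrows y follow from those on the arrows x.  Going
   once around the cycle, the equations phi_j x_j(b) = x_j(c) phi_(j-1)
   determine every phi_v from phi_0 and the lower-left entry t R of phi_0: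
   phi_v only depends on the partial sums X_v = b_1 + ... + b_v and
   Y_v = c_1 + ... + c_v through an explicit "transport" formula, whose
   consistency at each even vertex v requires t to divide
   flux(X_v, Y_v) = t Q0 + S0 Y_v - P0 X_v - R X_v Y_v.  Reducing modulo t,
   M(b) ~ M(c) iff the residues of the points (X_v, Y_v), v even, all lie on
   one conic s y - p x = rho x y with p s <> 0 (Miso_fwd, Miso_bwd).

   The partial sums at even vertices are sums of the residues of the B_i,
   i odd.  Moving the origin to a point of such a conic gives a conic of the
   same kind, so the criterion can be anchored at any odd l (conic_at).  When
   t | B_l + B_(l+2), one of the points is the origin and the criterion
   becomes the vanishing of a 3x3 determinant, which is the polynomial of the
   theorem (conic_fit_pair). *)

From HB Require Import structures.
From mathcomp Require Import all_boot all_algebra.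
From mathcomp Require Import boolp complex Rstruct.
From mathcomp Require Import ring zify.

Set Implicit Arguments.
Unset Strict Implicit.
Unset Printing Implicit Defensive.

Import GRing.Theory.
Local Open Scope ring_scope.

Definition ev (f : Z) : CC := coef f 0.

Lemma evD f g : ev (f + g) = ev f + ev g. Proof. by []. Qed.
Lemma evN f : ev (- f) = - ev f. Proof. by []. Qed.
Lemma evB f g : ev (f - g) = ev f - ev g. Proof. by []. Qed.
Lemma evM f g : ev (f * g) = ev f * ev g.
Proof. by rewrite /ev coef_mul big_ord_recl big_ord0 addr0. Qed.
Lemma ev0 : ev 0 = 0. Proof. by []. Qed.
Lemma ev1 : ev 1 = 1. Proof. by []. Qed.
Lemma evt : ev t = 0. Proof. by []. Qed.
Definition evE := (evD, evN, evB, evM, ev0, ev1, evt).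

(* Multiplication by t shifts coefficients, so t is a non-zero-divisor. *)
Lemma coef_tS g n : coef (t * g) n.+1 = coef g n.
Proof.
rewrite coef_mul big_ord_recl big_ord_recl big1 ?addr0; last first.
  by move=> j _; rewrite (_ : coef t _ = 0) ?mul0r.
rewrite (_ : coef t ord0 = 0) // (_ : coef t (lift ord0 ord0) = 1) //.
by rewrite mul0r add0r mul1r subn1.
Qed.

Lemma tK f g : t * f = t * g -> f = g.
Proof.
by move=> e; apply: fpsP => n; rewrite -[coef f n]coef_tS -[coef g n]coef_tS e.
Qed.

Definition tdiv (f : Z) : Z := FPS (fun n => coef f n.+1).

Lemma tdivK f : ev f = 0 -> t * tdiv f = f.
Proof.
move=> f0; apply: fpsP => [[|n]]; last by rewrite coef_tS.
by rewrite -/(ev f) f0 -[LHS]/(ev (t * tdiv f)) evM evt mul0r.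
Qed.

Lemma tdvdP f : tdvd f <-> ev f = 0.
Proof.
split=> [[g ->] | /tdivK <-]; first by rewrite evM evt mul0r.
by exists (tdiv f).
Qed.

Lemma ev_ntdvd f : ~ tdvd f -> ev f != 0.
Proof. by move=> f_t; apply/eqP => /tdvdP. Qed.

Definition cst (a : CC) : Z := FPS (fun n => if n is 0 then a else 0).

Lemma cstM a b : cst a * cst b = cst (a * b).
Proof.
apply: fpsP => n; rewrite coef_mul big_ord_recl subn0 big1 ?addr0.
  by case: n => //= n; rewrite mulr0.
by move=> j _; rewrite /= mul0r.
Qed.

Lemma cst1 : cst 1 = 1.
Proof. by apply: fpsP => [[|n]]. Qed.

Lemma mx22E (M : 'M[Z]_2) : M = mx22 (M 0 0) (M 0 1) (M 1 0) (M 1 1).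
Proof.
apply/matrixP => i j; rewrite /mx22 !mxE.
case: i => [[|[|i]] Hi] //; case: j => [[|[|j]] Hj] //=.
all: by congr (M _ _); apply/val_inj.
Qed.

Lemma mx22M a b c d e f g h :
  mx22 a b c d *m mx22 e f g h
  = mx22 (a * e + b * g) (a * f + b * h) (c * e + d * g) (c * f + d * h).
Proof.
apply/matrixP => i j; rewrite !mxE !big_ord_recl big_ord0 addr0 !mxE /=.
by case: i => [[|[|i]] Hi]; case: j => [[|[|j]] Hj].
Qed.

Lemma mx22_eq a b c d a' b' c' d' :
  mx22 a b c d = mx22 a' b' c' d' <-> [/\ a = a', b = b', c = c' & d = d'].
Proof.
split=> [e | [-> -> -> ->] //].
have entry (i j : 'I_2) := congr1 (fun M : 'M[Z]_2 => M i j) e.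
by have := entry 0 0; have := entry 0 1; have := entry 1 0; have := entry 1 1;
  rewrite !mxE.
Qed.

Lemma mx22_scalar (a : Z) : a%:M = mx22 a 0 0 a.
Proof.
apply/matrixP => i j; rewrite !mxE.
by case: i => [[|[|i]] Hi]; case: j => [[|[|j]] Hj]; rewrite //= mulr1n.
Qed.

Definition unit22 (M : 'M[Z]_2) : Prop :=
  exists N : 'M[Z]_2, M *m N = 1%:M /\ N *m M = 1%:M.

Lemma unit22_cst a b c d u :
  a * d - b * c = cst u -> u != 0 -> unit22 (mx22 a b c d).
Proof.
move=> det_u u0; pose v := cst u^-1.
have vdet : v * (a * d - b * c) = 1 by rewrite det_u cstM mulVf // cst1.
exists (mx22 (v * d) (- (v * b)) (- (v * c)) (v * a)).
by rewrite mx22_scalar !mx22M; split; apply/mx22_eq; split; rewrite -?vdet; ring.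
Qed.

Lemma unit22_diag (M : 'M[Z]_2) :
  unit22 M -> ev (M 1 0) = 0 -> ev (M 0 0) * ev (M 1 1) != 0.
Proof.
move=> [N [MN _]] M10.
have /mx22_eq[e00 _ e10 e11] :
  mx22 (M 0 0 * N 0 0 + M 0 1 * N 1 0) (M 0 0 * N 0 1 + M 0 1 * N 1 1)
       (M 1 0 * N 0 0 + M 1 1 * N 1 0) (M 1 0 * N 0 1 + M 1 1 * N 1 1)
  = mx22 1 0 0 1 by rewrite -mx22M -!mx22E -mx22_scalar.
move: (congr1 ev e00) (congr1 ev e10) (congr1 ev e11).
rewrite !evE M10 !mul0r !add0r => h00 h10 h11.
have M11 : ev (M 1 1) != 0.
  by apply: contra_eq_neq h11 => ->; rewrite mul0r eq_sym oner_eq0.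
have N10 : ev (N 1 0) = 0 by move/eqP: h10; rewrite mulf_eq0 (negPf M11) => /eqP.
rewrite mulf_neq0 //; apply: contra_eq_neq h00 => ->.
by rewrite N10 mulr0 addr0 mul0r eq_sym oner_eq0.
Qed.

Definition xo (b : Z) : 'M[Z]_2 := mx22 t b 0 1.
Definition xe (b : Z) : 'M[Z]_2 := mx22 1 b 0 t.

Lemma xmat_odd b (j : 'I_10) : odd j -> xmat b j = xo (b j).
Proof. by rewrite /xmat => ->. Qed.

Lemma xmat_even b (j : 'I_10) : ~~ odd j -> xmat b j = xe (b j).
Proof. by rewrite /xmat => /negPf ->. Qed.

Lemma xmat_ymat b j : xmat b j *m ymat b j = t%:M.
Proof.
by rewrite /xmat /ymat mx22_scalar; case: ifP => _; rewrite mx22M; congr mx22; ring.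
Qed.

Lemma ymat_xmat b j : ymat b j *m xmat b j = t%:M.
Proof.
by rewrite /xmat /ymat mx22_scalar; case: ifP => _; rewrite mx22M; congr mx22; ring.
Qed.

(* Since t is a non-zero-divisor, a map intertwining X and X' also
   intertwines Y = t X^-1 and Y' = t X'^-1. *)
Lemma intertwine_y (X X' Y Y' A A' : 'M[Z]_2) :
  X *m Y = t%:M -> Y' *m X' = t%:M ->
  A' *m X = X' *m A -> A *m Y = Y' *m A'.
Proof.
move=> XY YX' AX.
have e : t *: (Y' *m A') = t *: (A *m Y).
  rewrite -mul_mx_scalar -XY !mulmxA -[Y' *m A' *m X]mulmxA AX !mulmxA YX'.
  by rewrite mul_scalar_mx scalemxAl.
apply/matrixP => i j; apply: tK.
by move/matrixP/(_ i j): e; rewrite !mxE => ->.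
Qed.

Lemma MisoP (b c : 'I_10 -> Z) :
  Miso b c <->
  exists phi : 'I_10 -> 'M[Z]_2,
    (forall i, unit22 (phi i)) /\
    (forall j, phi j *m xmat b j = xmat c j *m phi (j - 1)).
Proof.
split=> [[phi [inv_phi phix _]] | [phi [inv_phi phix]]]; first by exists phi.
exists phi; split=> // j.
exact: intertwine_y (xmat_ymat b j) (ymat_xmat c j) (phix j).
Qed.

(* Given the entries P0, Q0,
   S0 of phi_0 and R, where t R is the lower-left entry of phi_0, the map at
   a vertex with partial sums X (for b) and Y (for c) has the shape
   odd_state X Y at odd vertices and even_state X Y Q with t Q = flux X Y at
   even ones. *)
Section Transport.
Variables P0 Q0 R S0 : Z.

Definition flux (X Y : Z) : Z := t * Q0 + S0 * Y - P0 * X - R * X * Y.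

Definition odd_state (X Y : Z) : 'M[Z]_2 :=
  mx22 (P0 + R * Y) (flux X Y) R (S0 - R * X).

Definition even_state (X Y Q : Z) : 'M[Z]_2 :=
  mx22 (P0 + R * Y) Q (t * R) (S0 - R * X).

Lemma odd_step (M : 'M[Z]_2) X Y Q b c : t * Q = flux X Y ->
  M *m xo b = xo c *m even_state X Y Q <-> M = odd_state (X + b) (Y + c).
Proof.
move=> tQ; rewrite [M]mx22E /odd_state /even_state /xo !mx22M !mx22_eq.
split=> [[e00 e01 e10 e11] | [-> -> -> ->]]; last first.
  by rewrite tQ /flux; split; ring.
have m00 : M 0 0 = P0 + R * (Y + c).
  by apply: tK; rewrite -[LHS]addr0 -(mulr0 (M 0 1)) mulrC e00; ring.
have m10 : M 1 0 = R.
  by apply: tK; rewrite -[LHS]addr0 -(mulr0 (M 1 1)) mulrC e10; ring.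
split=> //.
- apply: (addrI (M 0 0 * b)); rewrite -[M 0 1]mulr1 e01 m00 tQ /flux; ring.
- apply: (addrI (M 1 0 * b)); rewrite -[M 1 1]mulr1 e11 m10; ring.
Qed.

Lemma even_step (M : 'M[Z]_2) X Y b c :
  M *m xe b = xe c *m odd_state X Y <->
  exists2 Q, M = even_state (X + b) (Y + c) Q & t * Q = flux (X + b) (Y + c).
Proof.
rewrite [M]mx22E /odd_state /even_state /xe !mx22M !mx22_eq.
split=> [[e00 e01 e10 e11] | [Q /mx22_eq[-> -> -> ->] tQ]]; last first.
  by split; rewrite ?(mulrC Q) ?tQ /flux; ring.
have m00 : M 0 0 = P0 + R * (Y + c).
  by rewrite -[M 0 0]mulr1 -[_ * 1]addr0 -(mulr0 (M 0 1)) e00; ring.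
have m10 : M 1 0 = t * R.
  by rewrite -[M 1 0]mulr1 -[_ * 1]addr0 -(mulr0 (M 1 1)) e10; ring.
exists (M 0 1).
  rewrite m00 m10; congr mx22; apply: tK.
  apply: (addrI (M 1 0 * b)); rewrite [t * M 1 1]mulrC e11 m10; ring.
apply: (addrI (M 0 0 * b)); rewrite [t * M 0 1]mulrC e01 m00 /flux; ring.
Qed.

Lemma det_odd_state X Y :
  (P0 + R * Y) * (S0 - R * X) - flux X Y * R = P0 * S0 - t * Q0 * R.
Proof. by rewrite /flux; ring. Qed.

Lemma det_even_state X Y Q : t * Q = flux X Y ->
  (P0 + R * Y) * (S0 - R * X) - Q * (t * R) = P0 * S0 - t * Q0 * R.
Proof. by move=> tQ; rewrite mulrA (mulrC Q) tQ /flux; ring. Qed.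

End Transport.

Lemma val_natr k : (k < 10)%N -> val (k%:R : 'I_10) = k.
Proof. by move=> k10; rewrite -[RHS](modn_small k10); exact: (@val_Zp_nat 10). Qed.

Lemma arrowP (P : 'I_10 -> 'I_10 -> Prop) :
  P 0 9%:R -> (forall k, (k < 9)%N -> P k.+1%:R k%:R) -> forall j, P j (j - 1).
Proof.
move=> P0 PS [[|k] k10].
  have -> : Ordinal k10 = 0 by apply/val_inj.
  by rewrite (_ : 0 - 1 = 9%:R) //; apply/val_inj.
have -> : Ordinal k10 = k.+1%:R by apply/val_inj; rewrite val_natr.
by rewrite -natr1 addrK natr1; apply: PS.
Qed.

Lemma odd_pred (j : 'I_10) : odd (j - 1)%R = ~~ odd j.
Proof.
move: j; apply: (@arrowP (fun j j' => odd j' = ~~ odd j)) => // k k9.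
by rewrite !val_natr /= ?negbK //; apply: ltnW.
Qed.

Lemma odd_add_even (l : 'I_10) k : ~~ odd k -> odd (l + k%:R)%R = odd l.
Proof.
move=> even_k; rewrite -[l in (l + _)%R]natr_Zp -natrD (@val_Zp_nat 10) //.
by rewrite odd_mod // oddD (negPf even_k) addbF.
Qed.

Lemma addrnn (l : 'I_10) m n : l + m%:R + n%:R = l + (m + n)%:R.
Proof. by rewrite natrD addrA. Qed.

Definition cum (b : 'I_10 -> Z) (k : nat) : Z := \sum_(1 <= i < k.+1) b i%:R.

Lemma cum0 b : cum b 0 = 0.
Proof. by rewrite /cum big_geq. Qed.

Lemma cumS b k : cum b k.+1 = cum b k + b k.+1%:R.
Proof. by rewrite /cum big_nat_recr. Qed.

Lemma sum_cum (b : 'I_10 -> Z) : \sum_i b i = b 0 + cum b 9.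
Proof.
rewrite big_ord_recl /cum big_add1 big_mkord; congr (_ + _).
apply: eq_bigr => i _; congr b; apply/val_inj.
by rewrite val_natr //; exact: (ltn_ord i).
Qed.

(* When b sums to zero, the partial sums are well defined on the cycle. *)
Lemma cum_pred (b : 'I_10 -> Z) : \sum_i b i = 0 ->
  forall j : 'I_10, cum b j = cum b (j - 1)%R + b j.
Proof.
rewrite sum_cum => b0.
apply: (@arrowP (fun j j' => cum b j = cum b j' + b j)) => [|k k9].
  by rewrite val_natr // cum0 addrC b0.
by rewrite !val_natr ?cumS //; apply: ltnW.
Qed.

(* Conics s y - p x = rho x y through the origin over a field.  For p s <> 0
   such a conic is the graph of the Moebius map x |-> p x / (s - rho x). *)
Section Conics.
Variable F : fieldType.

Definition conic (p s rho x y : F) : F := s * y - p * x - rho * x * y.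

Lemma conic00 p s rho : conic p s rho 0 0 = 0.
Proof. by rewrite /conic; ring. Qed.

Lemma conic_shift p s rho x0 y0 x y :
  conic p s rho (x0 + x) (y0 + y)
  = conic p s rho x0 y0 + conic (p + rho * y0) (s - rho * x0) rho x y.
Proof. by rewrite /conic; ring. Qed.

Lemma conic_shift_nondeg p s rho x0 y0 :
  (p + rho * y0) * (s - rho * x0) = p * s + rho * conic p s rho x0 y0.
Proof. by rewrite /conic; ring. Qed.

Definition conic_fit (b1 b2 b3 b4 g1 g2 g3 g4 : F) : Prop :=
  exists p s rho, p * s != 0 /\
    [/\ conic p s rho b1 g1 = 0,
        conic p s rho (b1 + b2) (g1 + g2) = 0,
        conic p s rho (b1 + b2 + b3) (g1 + g2 + g3) = 0 &
        conic p s rho (b1 + b2 + b3 + b4) (g1 + g2 + g3 + g4) = 0].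

(* For increments summing to zero the condition is invariant under cyclic
   rotation: shift the origin to the first point. *)
Lemma conic_fit_rot (b1 b2 b3 b4 b5 g1 g2 g3 g4 g5 : F) :
  b1 + b2 + b3 + b4 + b5 = 0 -> g1 + g2 + g3 + g4 + g5 = 0 ->
  conic_fit b1 b2 b3 b4 g1 g2 g3 g4 -> conic_fit b2 b3 b4 b5 g2 g3 g4 g5.
Proof.
move=> hb hg [p [s [rho [nondeg [e1 e2 e3 e4]]]]].
have shifted x y :
    conic (p + rho * g1) (s - rho * b1) rho x y = conic p s rho (b1 + x) (g1 + y).
  by rewrite conic_shift e1 add0r.
exists (p + rho * g1), (s - rho * b1), rho.
rewrite conic_shift_nondeg e1 mulr0 addr0; split=> //.
by split; rewrite shifted ?addrA // hb hg conic00.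
Qed.

(* The determinant with rows (x_i, y_i, x_i y_i). *)
Definition det3 (x1 y1 x2 y2 x3 y3 : F) : F :=
  x1 * y2 * y3 * (x3 - x2) - y1 * x2 * x3 * (y3 - y2)
  + x1 * y1 * (x2 * y3 - x3 * y2).

(* Cramer's rule for the linear system in (p, s, rho). *)
Lemma det3_cramer p s rho x1 y1 x2 y2 x3 y3 :
  det3 x1 y1 x2 y2 x3 y3 * p =
  y2 * y3 * (x2 - x3) * conic p s rho x1 y1
  + y1 * y3 * (x3 - x1) * conic p s rho x2 y2
  + y1 * y2 * (x1 - x2) * conic p s rho x3 y3.
Proof. by rewrite /det3 /conic; ring. Qed.

Lemma conic_through3 (x1 y1 x2 y2 x3 y3 : F) :
  x1 != 0 -> y1 != 0 -> x2 != 0 -> y2 != 0 -> x1 != x2 -> y1 != y2 ->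
  (exists p s rho, p * s != 0 /\
     [/\ conic p s rho x1 y1 = 0, conic p s rho x2 y2 = 0
       & conic p s rho x3 y3 = 0])
  <-> det3 x1 y1 x2 y2 x3 y3 = 0.
Proof.
move=> x1_0 y1_0 x2_0 y2_0 x12 y12; split.
  move=> [p [s [rho [nondeg [e1 e2 e3]]]]].
  have /eqP := det3_cramer p s rho x1 y1 x2 y2 x3 y3.
  rewrite e1 e2 e3 !mulr0 !addr0 mulf_eq0 => /orP[/eqP // | /eqP p0].
  by move: nondeg; rewrite p0 mul0r eqxx.
move=> d0; exists (y1 * y2 * (x1 - x2)), (x1 * x2 * (y1 - y2)), (y1 * x2 - x1 * y2).
split; first by rewrite !mulf_neq0 ?subr_eq0.
split; rewrite /conic; last (rewrite -d0 /det3); ring.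
Qed.

(* When b1 + b3 = g1 + g3 = 0 the second point is the origin, and the
   condition is the vanishing of the determinant of the other three. *)
Lemma conic_fit_pair (b1 b3 b5 b7 b9 g1 g3 g5 g7 g9 : F) :
  b1 + b3 + b5 + b7 + b9 = 0 -> g1 + g3 + g5 + g7 + g9 = 0 ->
  b1 + b3 = 0 -> g1 + g3 = 0 ->
  b1 != 0 -> g1 != 0 -> b5 != 0 -> g5 != 0 -> b3 + b5 != 0 -> g3 + g5 != 0 ->
  conic_fit b1 b3 b5 b7 g1 g3 g5 g7
  <-> (b9 + b1) * g1 * b5 * g7 - (g9 + g1) * b1 * g5 * b7 = 0.
Proof.
move=> hb hg b13 g13 b1_0 g1_0 b5_0 g5_0 b35 g35.
rewrite b13 add0r in hb; rewrite g13 add0r in hg.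
move: (addr0_eq b13) (addr0_eq g13) (addr0_eq hb) (addr0_eq hg) => ? ? ? ?.
subst b3 g3 b9 g9.
rewrite addrC subr_eq0 eq_sym in b35; rewrite addrC subr_eq0 eq_sym in g35.
have -> : (- (b5 + b7) + b1) * g1 * b5 * g7 - (- (g5 + g7) + g1) * b1 * g5 * b7
          = det3 b1 g1 b5 g5 (b5 + b7) (g5 + g7) by rewrite /det3; ring.
rewrite -conic_through3 // /conic_fit !addrN !add0r.
split=> [[p [s [rho [nd [e1 _ e3 e4]]]]] | [p [s [rho [nd [e1 e3 e4]]]]]].
  by exists p, s, rho.
by exists p, s, rho; split; rewrite ?conic00.
Qed.

End Conics.

Lemma ev_flux P0 Q0 R S0 X Y :
  ev (flux P0 Q0 R S0 X Y) = conic (ev P0) (ev S0) (ev R) (ev X) (ev Y).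
Proof. by rewrite /flux /conic !evE mul0r add0r. Qed.

Definition cum_on_conic (b c : 'I_10 -> Z) (p s rho : CC) : Prop :=
  forall k, (k < 10)%N -> ~~ odd k ->
  conic p s rho (ev (cum b k)) (ev (cum c k)) = 0.

Lemma even_lower (M N : 'M[Z]_2) b c : M *m xe b = xe c *m N -> M 1 0 = t * N 1 0.
Proof.
rewrite [M]mx22E [N]mx22E /xe !mx22M => /mx22_eq[_ _ e _].
by move: e; rewrite !mxE /= mulr1 mulr0 addr0 mul0r add0r.
Qed.

Lemma chain_fwd (b c : 'I_10 -> Z) (phi : 'I_10 -> 'M[Z]_2) P0 Q0 R S0 :
  (forall j, phi j *m xmat b j = xmat c j *m phi (j - 1)) ->
  phi 0 = mx22 P0 Q0 (t * R) S0 ->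
  forall m, (m < 5)%N ->
  exists2 Q, phi (2 * m)%N%:R = even_state P0 R S0 (cum b (2 * m)) (cum c (2 * m)) Q
           & t * Q = flux P0 Q0 R S0 (cum b (2 * m)) (cum c (2 * m)).
Proof.
move=> hx phi0; elim=> [_ | m IHm m5].
  exists Q0; last by rewrite /flux muln0 !cum0; ring.
  by rewrite muln0 !cum0 mulr0n phi0 /even_state; congr mx22; ring.
have [Q phim tQ] := IHm (ltnW m5).
have odd1 : odd ((2 * m).+1%:R : 'I_10) by rewrite val_natr /= ?odd_double //; lia.
have even2 : ~~ odd ((2 * m).+2%:R : 'I_10) by rewrite val_natr /= ?odd_double //; lia.
have hx1 := hx (2 * m).+1%:R.
rewrite -natr1 addrK natr1 xmat_odd // xmat_odd // phim (odd_step _ _ _ tQ) in hx1.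
have hx2 := hx (2 * m).+2%:R.
rewrite -natr1 addrK natr1 hx1 !xmat_even // in hx2.
have /even_step[Q' phi2 tQ'] := hx2.
by rewrite -!cumS in phi2 tQ'; rewrite mulnS add2n; exists Q'.
Qed.

(* An isomorphism yields a nondegenerate conic through the residues of the
   even partial sums: p, s, rho are the residues of P0, S0, R. *)
Lemma Miso_fwd (b c : 'I_10 -> Z) :
  Miso b c -> exists p s rho, p * s != 0 /\ cum_on_conic b c p s rho.
Proof.
move=> /MisoP[phi [inv_phi hx]].
have lower0 : phi 0 1 0 = t * phi 9%:R 1 0.
  have := hx 0; rewrite !xmat_even // (_ : 0 - 1 = 9%:R); last exact/val_inj.
  exact: even_lower.
set P0 := phi 0 0 0; set Q0 := phi 0 0 1; set S0 := phi 0 1 1.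
set R := phi 9%:R 1 0.
have phi0 : phi 0 = mx22 P0 Q0 (t * R) S0 by rewrite -lower0 -mx22E.
exists (ev P0), (ev S0), (ev R); split.
  by apply: unit22_diag; rewrite ?lower0 ?evM ?evt ?mul0r.
move=> k k10 even_k; have [m m5 ->] : exists2 m, (m < 5)%N & (k = 2 * m)%N.
  by exists k./2; [rewrite ltn_half_double | rewrite mul2n even_halfK].
have [Q _ tQ] := chain_fwd hx phi0 m5.
by rewrite -(ev_flux _ Q0) -tQ evM evt mul0r.
Qed.

(* Conversely, lifting the conic (p, s, rho) to constants and transporting
   the even state with Q0 = 0 around the cycle gives an isomorphism. *)
Lemma Miso_bwd (b c : 'I_10 -> Z) p s rho :
  \sum_i b i = 0 -> \sum_i c i = 0 ->
  p * s != 0 -> cum_on_conic b c p s rho -> Miso b c.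
Proof.
move=> hb hc nondeg on_conic.
pose P0 := cst p; pose S0 := cst s; pose R := cst rho.
pose F (v : 'I_10) := flux P0 0 R S0 (cum b v) (cum c v).
pose phi (v : 'I_10) :=
  if odd v then odd_state P0 0 R S0 (cum b v) (cum c v)
  else even_state P0 R S0 (cum b v) (cum c v) (tdiv (F v)).
have tF (v : 'I_10) : ~~ odd v -> t * tdiv (F v) = F v.
  by move=> even_v; apply: tdivK; rewrite /F ev_flux; apply: on_conic.
have det_ps : P0 * S0 - t * 0 * R = cst (p * s).
  by rewrite cstM mulr0 mul0r subr0.
apply/MisoP; exists phi; split=> [v | j].
  rewrite /phi; case: ifP => odd_v.
    by apply: (unit22_cst _ nondeg); rewrite det_odd_state.
  by apply: (unit22_cst _ nondeg); rewrite (det_even_state (tF v (negbT odd_v))).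
rewrite /phi odd_pred; case: ifP => odd_j /=.
  rewrite !xmat_odd // (cum_pred hb j) (cum_pred hc j).
  have tFj : t * tdiv (F (j - 1)) = F (j - 1) by apply: tF; rewrite odd_pred odd_j.
  by apply/(odd_step _ _ _ tFj).
rewrite !xmat_even ?odd_j //; apply/even_step.
by exists (tdiv (F j)); rewrite ?tF ?odd_j // /F -(cum_pred hb j) -(cum_pred hc j).
Qed.

Definition res (b : 'I_10 -> Z) (i : 'I_10) : CC := ev (Bsum b i).

Definition conic_at (b c : 'I_10 -> Z) (l : 'I_10) : Prop :=
  conic_fit (res b l) (res b (l + 2%:R)) (res b (l + 4%:R)) (res b (l + 6%:R))
            (res c l) (res c (l + 2%:R)) (res c (l + 4%:R)) (res c (l + 6%:R)).

Lemma cum_res b k : ev (cum b k.+2) = ev (cum b k) + res b k.+1%:R.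
Proof. by rewrite !cumS /res /Bsum natr1 !evD addrA. Qed.

Lemma cum_res_even (b : 'I_10 -> Z) :
  [/\ ev (cum b 2) = res b 1, ev (cum b 4) = res b 1 + res b (1 + 2%:R),
      ev (cum b 6) = res b 1 + res b (1 + 2%:R) + res b (1 + 4%:R)
    & ev (cum b 8) = res b 1 + res b (1 + 2%:R) + res b (1 + 4%:R) + res b (1 + 6%:R)].
Proof. by rewrite !cum_res cum0 ev0 add0r mulr1n -!mulrS. Qed.

Lemma conic_at1 (b c : 'I_10 -> Z) :
  conic_at b c 1 <-> exists p s rho, p * s != 0 /\ cum_on_conic b c p s rho.
Proof.
have [b2 b4 b6 b8] := cum_res_even b; have [c2 c4 c6 c8] := cum_res_even c.
split=> [[p [s [rho [nd [e2 e4 e6 e8]]]]] | [p [s [rho [nd on_conic]]]]].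
  exists p, s, rho; split=> // k.
  by case: k => [|[|[|[|[|[|[|[|[|[|k]]]]]]]]]] //= _ _;
    rewrite ?cum0 ?ev0 ?conic00 ?b2 ?c2 ?b4 ?c4 ?b6 ?c6 ?b8 ?c8.
exists p, s, rho; split=> //.
by split; [rewrite -b2 -c2 | rewrite -b4 -c4 | rewrite -b6 -c6 | rewrite -b8 -c8];
  apply: on_conic.
Qed.

Lemma sum_Bsum (b : 'I_10 -> Z) (l : 'I_10) :
  \sum_i b i = Bsum b l + Bsum b (l + 2%:R) + Bsum b (l + 4%:R)
               + Bsum b (l + 6%:R) + Bsum b (l + 8%:R).
Proof.
have next k : l + k%:R + 1 = l + k.+1%:R by rewrite -addrA natr1.
rewrite (reindex_inj (addrI l)) (sum_cum (fun i => b (l + i))) !cumS cum0 /=.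
rewrite /Bsum !next -[l + 1]/(l + 1%:R) addr0.
ring.
Qed.

Lemma res_sum (b : 'I_10 -> Z) (l : 'I_10) : \sum_i b i = 0 ->
  res b l + res b (l + 2%:R) + res b (l + 4%:R) + res b (l + 6%:R)
  + res b (l + 8%:R) = 0.
Proof. by rewrite (sum_Bsum b l) => /(congr1 ev); rewrite !evD. Qed.

Section Anchor.
Variables b c : 'I_10 -> Z.
Hypotheses (hb : \sum_i b i = 0) (hc : \sum_i c i = 0).

(* Moving the anchor from l to l + 2 is the rotation of conic_fit_rot. *)
Lemma conic_at_shift (l : 'I_10) : conic_at b c l -> conic_at b c (l + 2%:R).
Proof.
move=> /(conic_fit_rot (res_sum l hb) (res_sum l hc)).
by rewrite /conic_at !addrnn; apply.
Qed.

Lemma conic_at_shiftn (l : 'I_10) n :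
  conic_at b c l -> conic_at b c (l + (2 * n)%N%:R).
Proof.
move=> hl; elim: n => [|n IHn]; first by rewrite addr0.
by rewrite mulnS addnC natrD addrA; apply: conic_at_shift IHn.
Qed.

(* Shifting five times by 2 comes back to the start, so the criterion may
   be anchored at any odd vertex. *)
Lemma Miso_conic_at (l : 'I_10) : odd l -> (Miso b c <-> conic_at b c l).
Proof.
move=> odd_l.
have Miso1 : Miso b c <-> conic_at b c 1.
  rewrite conic_at1; split; first exact: Miso_fwd.
  by move=> [p [s [rho [nd on_conic]]]]; apply: Miso_bwd on_conic.
have l_eq : l = 1 + (2 * l./2)%N%:R.
  have := congr1 (fun n => n%:R : 'I_10) (odd_double_half l).
  by rewrite /= odd_l natr_Zp natrD mul2n => e; rewrite -[in LHS]e.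
rewrite Miso1; split=> [h1 | hl]; first by rewrite l_eq; apply: conic_at_shiftn.
have := conic_at_shiftn (5 - l./2) hl.
rewrite [X in conic_at _ _ (X + _)]l_eq -addrA -natrD -mulnDr subnKC; last first.
  by rewrite -ltnS ltn_half_double (ltn_trans (ltn_ord l)).
by rewrite (_ : (2 * 5)%N%:R = 0 :> 'I_10) ?addr0 //; apply/val_inj.
Qed.

End Anchor.

Unset Implicit Arguments.
Theorem theorem2p8 (b c : 'I_10 -> Z) :
  \sum_(i < 10) b i = 0 ->
  \sum_(i < 10) c i = 0 ->
  (forall i : 'I_10, odd i -> ~ tdvd (Bsum b i)) ->
  (forall i : 'I_10, odd i -> ~ tdvd (Bsum c i)) ->
  forall l : 'I_10, odd l ->
  tdvd (Bsum b l + Bsum b (l + 2%:R)) ->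
  (forall i : 'I_10, odd i -> i != l -> ~ tdvd (Bsum b i + Bsum b (i + 2%:R))) ->
  tdvd (Bsum c l + Bsum c (l + 2%:R)) ->
  (forall i : 'I_10, odd i -> i != l -> ~ tdvd (Bsum c i + Bsum c (i + 2%:R))) ->
  (Miso b c <->
   tdvd ((Bsum b (l - 2%:R) + Bsum b l) * Bsum c l * Bsum b (l + 4%:R)
           * Bsum c (l + 6%:R)
         - (Bsum c (l - 2%:R) + Bsum c l) * Bsum b l * Bsum c (l + 4%:R)
           * Bsum b (l + 6%:R))).
Proof.
move=> hb hc nB nC l odd_l /tdvdP hBl nBl /tdvdP hCl nCl.
have odd2 : odd (l + 2%:R)%R by rewrite odd_add_even.
have odd4 : odd (l + 4%:R)%R by rewrite odd_add_even.
have l2_l : l + 2%:R != l by rewrite -subr_eq0 addrAC subrr add0r.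
have nB24 := ev_ntdvd (nBl _ odd2 l2_l); have nC24 := ev_ntdvd (nCl _ odd2 l2_l).
rewrite addrnn !evD in nB24 nC24; rewrite evD in hBl hCl.
rewrite (Miso_conic_at hb hc odd_l) tdvdP (_ : l - 2%:R = l + 8%:R); last exact/val_inj.
rewrite !evE; apply: conic_fit_pair => //; try exact: res_sum.
all: by apply: ev_ntdvd; first [apply: nB | apply: nC].
Qed.
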